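(* Let $L$ be an algebraic frame, $X_L$ its Priestley space, and $Y_L$ the spatial part of $X_L$. The following are equivalent: (1) $L$ is a coherent frame; (2) $X_L$ is a coherent L-space; (3) $Y_L$ is a spectral space.
   Context: A frame is a complete lattice satisfying $a\wedge\bigvee S=\bigvee\{a\wedge s\mid s\in S\}$. In a frame $L$, $a\ll b$ means whenever $b\le\bigvee S$ there is finite $T\subseteq S$ with $a\le\bigvee T$; $a$ is compact if $a\ll a$; $K(L)$ is the set of compact elements; $L$ is compact if its top is compact. $L$ is algebraic if $a=\bigvee\{b\in K(L)\mid b\le a\}$ for all $a$; arithmetic if algebraic and $\ll$ is stable ($a\ll b,c$ implies $a\ll b\wedge c$); coherent if arithmetic and compact. A Priestley space is a Stone space $X$ with a partial order such that clopen upsets separate points. An L-space is a Priestley space in which the downset of each clopen set is clopen and the closure of each open upset is open. ${\sf ClopUp}(X)$ is the set of clopen upsets; $\mathrm{cl}$ denotes closure. The Priestley space $X_L$ is the set of prime filters of $L$ ordered by inclusion with topology generated by the sets $\varphi(a)=\{x\mid a\in x\}$ and their complements. The spatial part of $X$ is $Y=\{y\in X\mid{\downarrow}y\text{ clopen}\}$, topologized by declaring $V\subseteq Y$ open iff $V=U\cap Y$ for some $U\in{\sf ClopUp}(X)$. A Scott upset is a closed upset $F$ with $\min F\subseteq Y$; ${\sf ClopSUp}(X)$ is the set of clopen Scott upsets. For $U,V\in{\sf ClopUp}(X)$, $V\ll U$ means that for every open upset $W$, $U\subseteq\mathrm{cl}\,W$ implies $V\subseteq W$; $\ker U=\bigcup\{V\in{\sf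 ClopUp}(X)\mid V\ll U\}$; $\mathrm{core}\,U=\bigcup\{V\in{\sf ClopSUp}(X)\mid V\subseteq U\}$. A coherent L-space is an L-space $X$ such that $\mathrm{core}\,U$ is dense in $U$ for each $U\in{\sf ClopUp}(X)$, $\ker(U\cap V)=\ker U\cap\ker V$ for all $U,V\in{\sf ClopUp}(X)$, and $X=\ker X$. A spectral space is a compact sober space with a basis of compact open sets in which the intersection of two compact open sets is compact. *)

From Stdlib Require Import List.

Set Implicit Arguments.

Record Frame := {
  fcar :> Type;
  fle : fcar -> fcar -> Prop;
  fle_refl : forall a, fle a a;
  fle_trans : forall a b c, fle a b -> fle b c -> fle a c;
  fle_antisym : forall a b, fle a b -> fle b a -> a = b;
  fsup : (fcar -> Prop) -> fcar;
  fsup_ub : forall (S : fcar -> Prop) a, S a -> fle a (fsup S);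
  fsup_least : forall (S : fcar -> Prop) b,
      (forall a, S a -> fle a b) -> fle (fsup S) b;
  fmeet : fcar -> fcar -> fcar;
  fmeet_lb1 : forall a b, fle (fmeet a b) a;
  fmeet_lb2 : forall a b, fle (fmeet a b) b;
  fmeet_glb : forall a b c, fle c a -> fle c b -> fle c (fmeet a b);
  fdistr : forall a (S : fcar -> Prop),
      fmeet a (fsup S) = fsup (fun c => exists s, S s /\ c = fmeet a s)
}.

Section FrameNotions.
Variable L : Frame.

Definition ftop : L := fsup L (fun _ => True).
Definition fbot : L := fsup L (fun _ => False).
Definition fjoin (a b : L) : L := fsup L (fun c => c = a \/ c = b).

Definition fsup_list (l : list L) : L := fsup L (fun c => In c l).

Definition way_below (a b : L) : Prop :=
  forall S : L -> Prop, fle L b (fsup L S) ->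
    exists l : list L, (forall c, In c l -> S c) /\ fle L a (fsup_list l).

Definition fcompact (a : L) : Prop := way_below a a.

Definition algebraic_frame : Prop :=
  forall a : L, a = fsup L (fun b => fcompact b /\ fle L b a).

Definition arithmetic_frame : Prop :=
  algebraic_frame /\
  forall a b c, way_below a b -> way_below a c -> way_below a (fmeet L b c).

Definition coherent_frame : Prop := arithmetic_frame /\ fcompact ftop.

Definition prime_filter (x : L -> Prop) : Prop :=
  (forall a b, x a -> fle L a b -> x b) /\
  (forall a b, x a -> x b -> x (fmeet L a b)) /\
  x ftop /\
  ~ x fbot /\
  (forall a b, x (fjoin a b) -> x a \/ x b).

End FrameNotions.

Section Topology.
Variable T : Type.
Variable opn : (T -> Prop) -> Prop.

Definition sub (A B : T -> Prop) : Prop := forall x, A x -> B x.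
Definition seteq (A B : T -> Prop) : Prop := forall x, A x <-> B x.
Definition setI (A B : T -> Prop) : T -> Prop := fun x => A x /\ B x.
Definition setC (A : T -> Prop) : T -> Prop := fun x => ~ A x.

Definition is_topology : Prop :=
  opn (fun _ => True) /\
  (forall U V, opn U -> opn V -> opn (setI U V)) /\
  (forall F : (T -> Prop) -> Prop, (forall U, F U -> opn U) ->
     opn (fun x => exists U, F U /\ U x)) /\
  (forall U V, seteq U V -> opn U -> opn V).

Definition closed (A : T -> Prop) : Prop := opn (setC A).
Definition clopen (A : T -> Prop) : Prop := opn A /\ closed A.

Definition closure (A : T -> Prop) : T -> Prop :=
  fun x => forall U, opn U -> U x -> exists y, U y /\ A y.

Definition compact_set (K : T -> Prop) : Prop :=
  forall F : (T -> Prop) -> Prop, (forall U, F U -> opn U) ->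
    (forall x, K x -> exists U, F U /\ U x) ->
    exists l : list (T -> Prop), (forall U, In U l -> F U) /\
      (forall x, K x -> exists U, In U l /\ U x).

Definition compact_space : Prop := compact_set (fun _ => True).

Definition hausdorff : Prop :=
  forall x y, x <> y -> exists U V, opn U /\ opn V /\ U x /\ V y /\
    forall z, ~ (U z /\ V z).

Definition zero_dimensional : Prop :=
  forall U x, opn U -> U x -> exists V, clopen V /\ V x /\ sub V U.

Definition stone_space : Prop :=
  is_topology /\ compact_space /\ hausdorff /\ zero_dimensional.

Definition irreducible_closed (C : T -> Prop) : Prop :=
  closed C /\ (exists x, C x) /\
  forall A B, closed A -> closed B -> sub C (fun x => A x \/ B x) ->
    sub C A \/ sub C B.

Definition sober : Prop :=
  forall C, irreducible_closed C ->
    exists x, seteq C (closure (fun z => z = x)) /\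
      forall x', seteq C (closure (fun z => z = x')) -> x' = x.

Definition compact_open (U : T -> Prop) : Prop := opn U /\ compact_set U.

Definition spectral_space : Prop :=
  is_topology /\ compact_space /\ sober /\
  (forall U x, opn U -> U x -> exists K, compact_open K /\ K x /\ sub K U) /\
  (forall K1 K2, compact_open K1 -> compact_open K2 -> compact_set (setI K1 K2)).

Definition generated_open (B : (T -> Prop) -> Prop) (U : T -> Prop) : Prop :=
  forall x, U x -> exists l : list (T -> Prop),
    (forall s, In s l -> B s) /\ (forall s, In s l -> s x) /\
    (forall y, (forall s, In s l -> s y) -> U y).

Variable le : T -> T -> Prop.

Definition partial_order : Prop :=
  (forall x, le x x) /\ (forall x y z, le x y -> le y z -> le x z) /\
  (forall x y, le x y -> le y x -> x = y).

Definition upset (A : T -> Prop) : Prop := forall x y, A x -> le x y -> A y.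
Definition downset_of (A : T -> Prop) : T -> Prop :=
  fun y => exists x, A x /\ le y x.

Definition clopen_upset (U : T -> Prop) : Prop := clopen U /\ upset U.

Definition priestley_space : Prop :=
  stone_space /\ partial_order /\
  forall x y, ~ le x y -> exists U, clopen_upset U /\ U x /\ ~ U y.

Definition L_space : Prop :=
  priestley_space /\
  (forall U, clopen U -> clopen (downset_of U)) /\
  (forall U, opn U -> upset U -> opn (closure U)).

Definition spatial_pt (y : T) : Prop := clopen (fun z => le z y).

Definition minimal_in (F : T -> Prop) (x : T) : Prop :=
  F x /\ forall z, F z -> le z x -> z = x.

Definition scott_upset (F : T -> Prop) : Prop :=
  closed F /\ upset F /\ forall x, minimal_in F x -> spatial_pt x.

Definition clopen_scott_upset (F : T -> Prop) : Prop :=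
  clopen F /\ scott_upset F.

Definition sp_way_below (V U : T -> Prop) : Prop :=
  forall W, opn W -> upset W -> sub U (closure W) -> sub V W.

Definition ker (U : T -> Prop) : T -> Prop :=
  fun x => exists V, clopen_upset V /\ sp_way_below V U /\ V x.

Definition core (U : T -> Prop) : T -> Prop :=
  fun x => exists V, clopen_scott_upset V /\ sub V U /\ V x.

Definition coherent_L_space : Prop :=
  L_space /\
  (forall U, clopen_upset U -> sub U (closure (core U))) /\
  (forall U V, clopen_upset U -> clopen_upset V ->
     seteq (ker (setI U V)) (setI (ker U) (ker V))) /\
  (forall x, ker (fun _ => True) x).

End Topology.

Section Dual.
Variable L : Frame.

Definition XL : Type := { x : L -> Prop | @prime_filter L x }.

Definition XL_le (x y : XL) : Prop :=
  forall a, proj1_sig x a -> proj1_sig y a.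

Definition phi (a : L) : XL -> Prop := fun x => proj1_sig x a.

Definition XL_subbasis (s : XL -> Prop) : Prop :=
  exists a : L, s = phi a \/ s = setC (phi a).

Definition XL_open : (XL -> Prop) -> Prop := generated_open XL_subbasis.

Definition YL : Type := { y : XL | spatial_pt XL_open XL_le y }.

Definition YL_open (V : YL -> Prop) : Prop :=
  exists U : XL -> Prop, clopen_upset XL_open XL_le U /\
    forall y : YL, V y <-> U (proj1_sig y).

End Dual.

(* Every frame is a distributive lattice, so the prime filter theorem (a Zorn
   argument, done here for an abstract entailment relation so that it also
   gives compactness of X_L) makes X_L a Priestley space whose clopen upsets are
   exactly the sets phi a.  The frame-theoretic notions then transfer through
   phi: closures of open upsets are phi of joins, X_L is an L-space,
   phi v << phi u iff v << u, and a point is spatial iff its filter is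
   completely prime, so that the opens of Y_L are again the sets phi a, with
   phi a compact iff a is.  For algebraic L, each compact k yields a clopen
   Scott upset phi k and enough completely prime filters to separate points,
   and all three conditions become: the compact elements are closed under
   binary meets and the top is compact. *)

From Stdlib Require Import List Classical FunctionalExtensionality PropExtensionality ProofIrrelevance.
From mathcomp Require classical_sets.
Import ListNotations.

Lemma set_ext {T : Type} (A B : T -> Prop) : (forall x, A x <-> B x) -> A = B.
Proof.
  intro H. apply functional_extensionality; intro x.
  apply propositional_extensionality; auto.
Qed.

Lemma setCC {T : Type} (A : T -> Prop) : setC (setC A) = A.
Proof. apply set_ext. intro. unfold setC. split; [apply NNPP|tauto]. Qed.

Lemma list_lift {A B : Type} (P : A -> Prop) (f : A -> B) (l : list B) :
  (forall v, In v l -> exists a, P a /\ v = f a) ->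
  exists la, (forall a, In a la -> P a) /\ l = map f la.
Proof.
  induction l as [|v l IH]; intro H.
  - exists []. split; [intros _ []|reflexivity].
  - destruct (H v (or_introl eq_refl)) as [a [Pa ->]].
    destruct IH as [la [Hla ->]]; [intros; apply H; right; auto|].
    exists (a :: la). split; [intros b [<-|Hb]; auto|reflexivity].
Qed.

Lemma list_partition {A : Type} (P Q : A -> Prop) (l : list A) :
  (forall x, In x l -> P x \/ Q x) ->
  exists l', (forall x, In x l' -> P x) /\ forall x, In x l -> In x l' \/ Q x.
Proof.
  induction l as [|y l IH]; intro H.
  - exists []. split; intros _ [].
  - destruct IH as [l' [H1 H2]]; [intros; apply H; right; auto|].
    destruct (H y (or_introl eq_refl)) as [Py|Qy].
    + exists (y :: l'). split; [intros x [<-|Hx]; auto|].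
      intros x [<-|Hx]; [left; left; auto|]. destruct (H2 x Hx); [left; right|right]; auto.
    + exists l'. split; auto. intros x [<-|Hx]; auto.
Qed.

Section FrameLemmas.
Variable L : Frame.
Local Notation "a ≤ b" := (fle L a b) (at level 70).
Local Notation "a ⊓ b" := (fmeet L a b) (at level 40, left associativity).
Local Notation "a ⊔ b" := (fjoin L a b) (at level 50, left associativity).
Local Notation "⊤" := (ftop L).
Local Notation "⊥" := (fbot L).
Local Notation "⋁ l" := (fsup_list L l) (at level 35).
Local Notation "a ≪ b" := (way_below L a b) (at level 70).

Hint Resolve fle_refl fmeet_lb1 fmeet_lb2 : core.

Lemma le_top a : a ≤ ⊤.
Proof. apply fsup_ub. exact I. Qed.

Lemma bot_le a : ⊥ ≤ a.
Proof. apply fsup_least. intros c []. Qed.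

Lemma le_joinl a b : a ≤ a ⊔ b.
Proof. apply fsup_ub. auto. Qed.

Lemma le_joinr a b : b ≤ a ⊔ b.
Proof. apply fsup_ub. auto. Qed.

Lemma join_le a b c : a ≤ c -> b ≤ c -> a ⊔ b ≤ c.
Proof. intros. apply fsup_least. intros x [->| ->]; auto. Qed.

Hint Resolve le_top bot_le le_joinl le_joinr : core.

Lemma meetC a b : a ⊓ b = b ⊓ a.
Proof. apply fle_antisym; apply fmeet_glb; auto. Qed.

Lemma meet_le_meet a b c d : a ≤ c -> b ≤ d -> a ⊓ b ≤ c ⊓ d.
Proof.
  intros. apply fmeet_glb; [apply fle_trans with a|apply fle_trans with b]; auto.
Qed.

Lemma join_le_join a b c d : a ≤ c -> b ≤ d -> a ⊔ b ≤ c ⊔ d.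
Proof.
  intros. apply join_le; [apply fle_trans with c|apply fle_trans with d]; auto.
Qed.

Lemma fsup_le_fsup (S T : L -> Prop) : (forall a, S a -> T a) -> fsup L S ≤ fsup L T.
Proof. intro H. apply fsup_least. intros a Sa. apply fsup_ub. auto. Qed.

Lemma meet_fsup_le a (S : L -> Prop) :
  a ⊓ fsup L S ≤ fsup L (fun c => exists s, S s /\ c = a ⊓ s).
Proof. rewrite fdistr. auto. Qed.

Lemma meet_joinDr a b c : a ⊓ (b ⊔ c) ≤ (a ⊓ b) ⊔ (a ⊓ c).
Proof.
  eapply fle_trans; [apply meet_fsup_le|].
  apply fsup_least. intros x [s [[-> | ->] ->]]; auto.
Qed.

Lemma join_meetDr m c d : (m ⊔ c) ⊓ (m ⊔ d) ≤ m ⊔ (c ⊓ d).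
Proof.
  eapply fle_trans; [apply meet_joinDr|]. apply join_le.
  - eapply fle_trans; [apply fmeet_lb2|auto].
  - rewrite meetC. eapply fle_trans; [apply meet_joinDr|]. apply join_le.
    + eapply fle_trans; [apply fmeet_lb2|auto].
    + rewrite meetC. auto.
Qed.

Lemma le_cut a b c : a ⊓ c ≤ b -> a ≤ b ⊔ c -> a ≤ b.
Proof.
  intros H1 H2. eapply fle_trans; [apply (fmeet_glb L a (b ⊔ c) a); auto|].
  eapply fle_trans; [apply meet_joinDr|]. apply join_le; auto.
Qed.

Definition fimp a b : L := fsup L (fun c => c ⊓ a ≤ b).

Lemma fimp_adj a b c : c ≤ fimp a b <-> c ⊓ a ≤ b.
Proof.
  split; intro H.
  - eapply fle_trans; [apply (meet_le_meet _ _ _ _ H (fle_refl L a))|].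
    rewrite meetC. eapply fle_trans; [apply meet_fsup_le|]. apply fsup_least.
    intros x [s [Hs ->]]. rewrite meetC. auto.
  - apply fsup_ub. auto.
Qed.

Definition fmeet_list (l : list L) : L := fold_right (fmeet L) ⊤ l.

Lemma le_fmeet_list l c : c ≤ fmeet_list l <-> forall x, In x l -> c ≤ x.
Proof.
  induction l as [|y l IH]; simpl; split.
  - intros _ x [].
  - auto.
  - intros H x [<-|Hx]; [eapply fle_trans; eauto|].
    apply IH; auto. eapply fle_trans; eauto.
  - intro H. apply fmeet_glb; auto. apply IH; auto.
Qed.

Lemma fmeet_list_le l x : In x l -> fmeet_list l ≤ x.
Proof. intro. apply (proj1 (le_fmeet_list l _) (fle_refl L _)); auto. Qed.

Lemma le_fsup_list l x : In x l -> x ≤ ⋁ l.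
Proof. intro. apply fsup_ub. auto. Qed.

Lemma fsup_list_le l c : (forall x, In x l -> x ≤ c) -> ⋁ l ≤ c.
Proof. intro. apply fsup_least. auto. Qed.

Lemma fsup_list_incl l l' : incl l l' -> ⋁ l ≤ ⋁ l'.
Proof. intro H. apply fsup_list_le. intros. apply le_fsup_list. auto. Qed.

Lemma fsup_list_cons x l : ⋁ (x :: l) ≤ x ⊔ ⋁ l.
Proof.
  apply fsup_list_le. intros y [->|H]; auto.
  eapply fle_trans; [apply le_fsup_list; eauto|auto].
Qed.

Lemma fsup_list_split (P : L -> Prop) c l :
  (forall x, In x l -> P x \/ x = c) ->
  exists l', (forall x, In x l' -> P x) /\ ⋁ l ≤ ⋁ l' ⊔ c.
Proof.
  intro H. destruct (list_partition P (fun x => x = c) l H) as [l' [H1 H2]].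
  exists l'. split; auto. apply fsup_list_le. intros x Hx.
  destruct (H2 x Hx) as [Hx'| ->]; auto.
  eapply fle_trans; [apply le_fsup_list; eauto|auto].
Qed.

Lemma fmeet_list_split (P : L -> Prop) c l :
  (forall x, In x l -> P x \/ x = c) ->
  exists l', (forall x, In x l' -> P x) /\ fmeet_list l' ⊓ c ≤ fmeet_list l.
Proof.
  intro H. destruct (list_partition P (fun x => x = c) l H) as [l' [H1 H2]].
  exists l'. split; auto. apply le_fmeet_list. intros x Hx.
  destruct (H2 x Hx) as [Hx'| ->]; auto.
  eapply fle_trans; [apply fmeet_lb1|apply fmeet_list_le; auto].
Qed.

Lemma way_below_le_l a a' b : a' ≤ a -> a ≪ b -> a' ≪ b.
Proof.
  intros H1 H2 S HS. destruct (H2 S HS) as [l [Hl Hl']].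
  exists l. split; auto. eapply fle_trans; eauto.
Qed.

Lemma way_below_le_r a b b' : a ≪ b -> b ≤ b' -> a ≪ b'.
Proof. intros H1 H2 S HS. apply H1. eapply fle_trans; eauto. Qed.

Lemma way_below_join a b c : a ≪ c -> b ≪ c -> a ⊔ b ≪ c.
Proof.
  intros Ha Hb S HS.
  destruct (Ha S HS) as [l1 [H1 H1']], (Hb S HS) as [l2 [H2 H2']].
  exists (l1 ++ l2). split.
  - intros x Hx. apply in_app_or in Hx as [Hx|Hx]; auto.
  - apply join_le; (eapply fle_trans; [eassumption|]);
      apply fsup_list_incl; intros ? ?; apply in_or_app; auto.
Qed.

Lemma way_below_fsup_list l c : (forall x, In x l -> x ≪ c) -> ⋁ l ≪ c.
Proof.
  induction l as [|y l IH]; intro H.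
  - intros S _. exists []. split; [intros _ []|]. apply fsup_list_le. intros _ [].
  - eapply way_below_le_l; [apply fsup_list_cons|].
    apply way_below_join; [apply H; left; auto|]. apply IH. intros; apply H; right; auto.
Qed.

Lemma fcompact_fsup_list l : (forall x, In x l -> fcompact L x) -> fcompact L (⋁ l).
Proof.
  intro H. apply way_below_fsup_list. intros x Hx.
  eapply way_below_le_r; [apply H; auto|apply le_fsup_list; auto].
Qed.

Definition way_below_stable : Prop :=
  forall a b c, a ≪ b -> a ≪ c -> a ≪ b ⊓ c.

Definition compact_meet_closed : Prop :=
  forall k1 k2, fcompact L k1 -> fcompact L k2 -> fcompact L (k1 ⊓ k2).

Section Algebraic.
Hypothesis alg : algebraic_frame L.

Lemma way_below_compact_between a b :
  a ≪ b <-> exists k, fcompact L k /\ a ≤ k /\ k ≤ b.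
Proof.
  split.
  - intro H. destruct (H (fun k => fcompact L k /\ k ≤ b)) as [l [Hl Hl']].
    { rewrite <- (alg b) at 1. auto. }
    exists (⋁ l). split; [apply fcompact_fsup_list; intros; apply Hl; auto|].
    split; auto. apply fsup_list_le. intros; apply Hl; auto.
  - intros [k [Hk [H1 H2]]].
    eapply way_below_le_l; [exact H1|]. eapply way_below_le_r; eauto.
Qed.

Lemma compact_below_not_le a b : ~ a ≤ b -> exists k, fcompact L k /\ k ≤ a /\ ~ k ≤ b.
Proof.
  intro H. apply NNPP. intro H'. apply H. rewrite (alg a). apply fsup_least.
  intros k [Hk Hka]. apply NNPP. intro. apply H'. eauto.
Qed.

Lemma way_below_stable_iff : way_below_stable <-> compact_meet_closed.
Proof.
  split.
  - intros H k1 k2 H1 H2.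
    apply H; eapply way_below_le_l; try eassumption; auto.
  - intros H a b c Hb Hc.
    apply way_below_compact_between in Hb as [k1 [K1 [A1 B1]]].
    apply way_below_compact_between in Hc as [k2 [K2 [A2 B2]]].
    apply way_below_compact_between. exists (k1 ⊓ k2).
    split; [auto|split; [apply fmeet_glb|apply meet_le_meet]; auto].
Qed.

End Algebraic.
End FrameLemmas.

Section MaximalExtension.
Variable T : Type.
Variable Bad : list T -> Prop.

Definition finitely_consistent (A : T -> Prop) : Prop :=
  forall l, (forall t, In t l -> A t) -> ~ Bad l.

Lemma finitely_consistent_sub (A B : T -> Prop) :
  (forall t, B t -> A t) -> finitely_consistent A -> finitely_consistent B.
Proof. intros HBA HA l Hl. apply HA. auto. Qed.

Lemma chain_list_bound (F : (T -> Prop) -> Prop) (A0 : T -> Prop) (l : list T) :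
  classical_sets.total_on F classical_sets.subset ->
  (forall t, In t l -> A0 t \/ exists2 X, F X & X t) ->
  exists X, (F X \/ X = fun _ => False) /\ forall t, In t l -> A0 t \/ X t.
Proof.
  intro Htot. induction l as [|t l IH]; intro Hl.
  - exists (fun _ => False). split; [right; auto|intros _ []].
  - destruct IH as [X [HX HlX]]; [intros; apply Hl; right; auto|].
    destruct (Hl t (or_introl eq_refl)) as [Ht|[Y FY Yt]].
    + exists X. split; auto. intros s [<-|Hs]; auto.
    + assert (HXY : (forall s, X s -> Y s) \/ (forall s, Y s -> X s)).
      { destruct HX as [FX| ->]; [apply Htot; auto|left; intros _ []]. }
      destruct HXY as [HXY|HYX].
      * exists Y. split; auto. intros s [<-|Hs]; auto. destruct (HlX s Hs); auto.
      * exists X. split; auto. intros s [<-|Hs]; auto.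
Qed.

Lemma maximal_finitely_consistent (A0 : T -> Prop) :
  finitely_consistent A0 ->
  exists A, (forall t, A0 t -> A t) /\ finitely_consistent A /\
    forall t, finitely_consistent (fun s => A s \/ s = t) -> A t.
Proof.
  intro H0.
  (* Zorn is applied to the sets [X] with [A0 ∪ X] consistent, so that the
     union of the empty chain is admissible. *)
  destruct (@classical_sets.Zorn_bigcup T
              (fun X => finitely_consistent (fun t => A0 t \/ X t))) as [A [HA Amax]].
  - intros F HF Htot l Hl.
    destruct (chain_list_bound F A0 l Htot Hl) as [X [[FX| ->] HlX]].
    + exact (HF X FX l HlX).
    + apply (H0 l). intros t Ht. destruct (HlX t Ht) as [|[]]; auto.
  - exists (fun t => A0 t \/ A t). split; [auto|split; [exact HA|]].
    intros t Ht. apply NNPP. intro Hnt. apply (Amax (fun s => A s \/ s = t)).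
    + split; [intros s Hs; auto|]. intro Hsub. apply Hnt. right. apply Hsub. auto.
    + eapply finitely_consistent_sub; [|exact Ht]. intros s [|[|]]; auto.
Qed.

End MaximalExtension.
Arguments finitely_consistent {T}.

Section PrimeFilters.
Variable L : Frame.
Local Notation "a ≤ b" := (fle L a b) (at level 70).
Local Notation "a ⊓ b" := (fmeet L a b) (at level 40, left associativity).
Local Notation "a ⊔ b" := (fjoin L a b) (at level 50, left associativity).
Local Notation "⊤" := (ftop L).
Local Notation "⊥" := (fbot L).
Local Notation "⋁ l" := (fsup_list L l) (at level 35).
Hint Resolve fle_refl fmeet_lb1 fmeet_lb2 le_top bot_le le_joinl le_joinr : core.

Definition completely_prime (x : L -> Prop) : Prop :=
  forall S, x (fsup L S) -> exists s, S s /\ x s.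

Section PrimeFilter.
Variable x : L -> Prop.
Hypothesis Hx : prime_filter L x.

Lemma pf_up a b : x a -> a ≤ b -> x b.
Proof. apply Hx. Qed.

Lemma pf_meet a b : x (a ⊓ b) <-> x a /\ x b.
Proof.
  split; [intro H; split; eapply pf_up; eauto|]. intros [H1 H2]; apply Hx; auto.
Qed.

Lemma pf_top : x ⊤.
Proof. apply Hx. Qed.

Lemma pf_bot : ~ x ⊥.
Proof. apply Hx. Qed.

Lemma pf_join a b : x (a ⊔ b) <-> x a \/ x b.
Proof. split; [apply Hx|]. intros [H|H]; eapply pf_up; eauto. Qed.

Lemma pf_fsup_list l : x (⋁ l) <-> exists c, In c l /\ x c.
Proof.
  split.
  - induction l as [|c l IH]; intro H.
    + exfalso. apply pf_bot. eapply pf_up; [exact H|]. apply fsup_list_le. intros _ [].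
    + assert (H' : x (c ⊔ ⋁ l)) by (eapply pf_up; [exact H|apply fsup_list_cons]).
      apply pf_join in H' as [H'|H']; [exists c; split; [left|]; auto|].
      destruct (IH H') as [d [H1 H2]]. exists d. split; [right|]; auto.
  - intros [c [H1 H2]]. eapply pf_up; [exact H2|]. apply le_fsup_list; auto.
Qed.

Lemma pf_fmeet_list l : x (fmeet_list L l) <-> forall c, In c l -> x c.
Proof.
  induction l as [|c l IH]; simpl.
  - split; [intros _ _ []|intros _; apply pf_top].
  - rewrite pf_meet, IH. split; [intros [H1 H2] d [<-|Hd]; auto|intros H; split; auto].
Qed.

End PrimeFilter.

Section MaximalIdeal.
Variable k : L.
Variable B : L -> Prop.
Hypothesis B_consistent : finitely_consistent (fun l => k ≤ ⋁ l) B.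
Hypothesis B_maximal :
  forall c, finitely_consistent (fun l => k ≤ ⋁ l) (fun s => B s \/ s = c) -> B c.

Lemma maximal_ideal_not_mem c : ~ B c -> exists l, (forall b, In b l -> B b) /\ k ≤ ⋁ l ⊔ c.
Proof.
  intro Hc. apply NNPP. intro H. apply Hc, B_maximal. intros l Hl Hk.
  destruct (fsup_list_split L B c l Hl) as [l' [H1 H2]].
  apply H. exists l'. split; auto. eapply fle_trans; eauto.
Qed.

Lemma maximal_ideal_down c l : (forall b, In b l -> B b) -> c ≤ ⋁ l -> B c.
Proof.
  intros Hl Hc. apply NNPP. intro Hnc.
  destruct (maximal_ideal_not_mem c Hnc) as [l' [H1 H2]].
  apply (B_consistent (l' ++ l)); [intros b Hb; apply in_app_or in Hb as [|]; auto|].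
  eapply fle_trans; [exact H2|]. apply join_le.
  - apply fsup_list_incl. apply incl_appl, incl_refl.
  - eapply fle_trans; [exact Hc|]. apply fsup_list_incl. apply incl_appr, incl_refl.
Qed.

Lemma maximal_ideal_prime : prime_filter L (fun c => ~ B c).
Proof.
  split; [|split; [|split; [|split]]].
  - intros a b Ha Hab Hb. apply Ha. apply (maximal_ideal_down a [b]).
    + intros x [<-|[]]; auto.
    + eapply fle_trans; [exact Hab|]. apply le_fsup_list. left; auto.
  - intros a b Ha Hb Hab.
    destruct (maximal_ideal_not_mem a Ha) as [l1 [H1 H1']].
    destruct (maximal_ideal_not_mem b Hb) as [l2 [H2 H2']].
    set (m := ⋁ (l1 ++ l2)).
    assert (Hm : forall l, incl l (l1 ++ l2) -> ⋁ l ≤ m) by (intros; apply fsup_list_incl; auto).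
    apply (B_consistent ((a ⊓ b) :: l1 ++ l2)).
    + intros t [<-|Ht]; auto. apply in_app_or in Ht as [|]; auto.
    + assert (Hk : k ≤ (m ⊔ a) ⊓ (m ⊔ b)).
      { apply fmeet_glb.
        - eapply fle_trans; [exact H1'|]. apply join_le_join; auto. apply Hm, incl_appl, incl_refl.
        - eapply fle_trans; [exact H2'|]. apply join_le_join; auto. apply Hm, incl_appr, incl_refl. }
      eapply fle_trans; [exact Hk|]. eapply fle_trans; [apply join_meetDr|]. apply join_le.
      * apply fsup_list_incl, incl_tl, incl_refl.
      * apply le_fsup_list. left. auto.
  - intro H. apply (B_consistent [⊤]); [intros t [<-|[]]; auto|].
    eapply fle_trans; [apply (le_top L k)|]. apply le_fsup_list. left; auto.
  - intro H. apply H. apply (maximal_ideal_down _ []); [intros _ []|auto].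
  - intros a b Hab. apply NNPP. intro H. apply Hab. apply (maximal_ideal_down _ [a; b]).
    + intros t [<-|[<-|[]]]; apply NNPP; intro; apply H; auto.
    + apply join_le; apply le_fsup_list; simpl; auto.
Qed.

Lemma maximal_ideal_avoids : ~ B k.
Proof.
  intro H. apply (B_consistent [k]); [intros t [<-|[]]; auto|].
  apply le_fsup_list. left; auto.
Qed.

Lemma maximal_ideal_completely_prime : fcompact L k -> completely_prime (fun c => ~ B c).
Proof.
  intros Hk S HS. apply NNPP. intro H.
  destruct (maximal_ideal_not_mem _ HS) as [l [Hl Hkl]].
  destruct (Hk (fun c => In c l \/ S c)) as [l' [Hl' Hkl']].
  { eapply fle_trans; [exact Hkl|]. apply join_le.
    - apply fsup_list_le. intros c Hc. apply fsup_ub. auto.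
    - apply fsup_le_fsup. auto. }
  apply (B_consistent l'); auto.
  intros t Ht. destruct (Hl' t Ht) as [|St]; auto.
  apply NNPP. intro. apply H. exists t. auto.
Qed.

End MaximalIdeal.

Theorem completely_prime_filter_of_compact (k : L) (B0 : L -> Prop) :
  fcompact L k -> finitely_consistent (fun l => k ≤ ⋁ l) B0 ->
  exists x, prime_filter L x /\ completely_prime x /\ x k /\ forall b, B0 b -> ~ x b.
Proof.
  intros Hk H0.
  destruct (maximal_finitely_consistent _ _ _ H0) as [B [HB0 [HB Bmax]]].
  exists (fun c => ~ B c). split; [apply (maximal_ideal_prime k); auto|].
  split; [apply (maximal_ideal_completely_prime k); auto|].
  split; [apply (maximal_ideal_avoids k B HB)|]. intros b Hb Hnb. auto.
Qed.

Section Entailment.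
Variable K : L -> L -> Prop.
Hypothesis K_weaken : forall a a' b b', a' ≤ a -> b ≤ b' -> K a b -> K a' b'.
Hypothesis K_cut : forall a b c, K (a ⊓ c) b -> K a (b ⊔ c) -> K a b.
Hypothesis K_le : forall a b, a ≤ b -> K a b.

Definition K_consistent (A B : L -> Prop) : Prop :=
  forall la lb, (forall a, In a la -> A a) -> (forall b, In b lb -> B b) ->
    ~ K (fmeet_list L la) (⋁ lb).

Lemma K_consistent_sub (A B A' B' : L -> Prop) :
  (forall a, A' a -> A a) -> (forall b, B' b -> B b) ->
  K_consistent A B -> K_consistent A' B'.
Proof. intros HA HB H la lb Ha Hb. apply H; auto. Qed.

Lemma K_consistent_single A B a b : K_consistent A B -> A a -> B b -> ~ K a b.
Proof.
  intros H Ha Hb HK. apply (H [a] [b]); [intros x [<-|[]]; auto|intros x [<-|[]]; auto|].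
  eapply K_weaken; [| |exact HK]; [apply fmeet_list_le|apply le_fsup_list]; left; auto.
Qed.

Lemma not_K_consistent A B :
  ~ K_consistent A B ->
  exists la lb, (forall a, In a la -> A a) /\ (forall b, In b lb -> B b) /\
    K (fmeet_list L la) (⋁ lb).
Proof. intro H. apply NNPP. intro Hn. apply H. intros la lb Ha Hb HK. apply Hn. eauto. Qed.

Lemma K_consistent_extend A B c :
  K_consistent A B ->
  K_consistent (fun a => A a \/ a = c) B \/ K_consistent A (fun b => B b \/ b = c).
Proof.
  intro H. apply NNPP. intro Hn. apply not_or_and in Hn as [H1 H2].
  destruct (not_K_consistent _ _ H1) as [la1 [lb1 [Ha1 [Hb1 K1]]]].
  destruct (not_K_consistent _ _ H2) as [la2 [lb2 [Ha2 [Hb2 K2]]]].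
  destruct (fmeet_list_split L A c la1 Ha1) as [la1' [Ha1' E1]].
  destruct (fsup_list_split L B c lb2 Hb2) as [lb2' [Hb2' E2]].
  apply (H (la1' ++ la2) (lb1 ++ lb2'));
    [intros x Hx; apply in_app_or in Hx as [|]; auto..|].
  apply (K_cut _ _ c).
  - eapply K_weaken; [| |exact K1].
    + eapply fle_trans; [|exact E1]. apply meet_le_meet; auto.
      apply le_fmeet_list. intros x Hx. apply fmeet_list_le, in_or_app. auto.
    + apply fsup_list_incl, incl_appl, incl_refl.
  - eapply K_weaken; [| |exact K2].
    + apply le_fmeet_list. intros x Hx. apply fmeet_list_le, in_or_app. auto.
    + eapply fle_trans; [exact E2|]. apply join_le_join; auto.
      apply fsup_list_incl, incl_appr, incl_refl.
Qed.

Section MaximalPair.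
Variables A B : L -> Prop.
Hypothesis AB_consistent : K_consistent A B.
Hypothesis A_maximal : forall c, K_consistent (fun a => A a \/ a = c) B -> A c.
Hypothesis B_maximal : forall c, K_consistent A (fun b => B b \/ b = c) -> B c.

Lemma maximal_pair_not_A c : ~ A c -> B c.
Proof.
  intro Hc. destruct (K_consistent_extend A B c AB_consistent) as [H|H]; auto.
  exfalso. auto.
Qed.

Lemma maximal_pair_not_le la lb :
  (forall a, In a la -> A a) -> (forall b, In b lb -> ~ A b) ->
  ~ fmeet_list L la ≤ ⋁ lb.
Proof.
  intros Ha Hb Hle. apply (AB_consistent la lb Ha); [|apply K_le; auto].
  intros b Hb'. apply maximal_pair_not_A; auto.
Qed.

Lemma maximal_pair_prime : prime_filter L A.
Proof.
  split; [|split; [|split; [|split]]].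
  - intros a b Ha Hab. apply NNPP. intro Hb.
    apply (maximal_pair_not_le [a] [b]); [intros x [<-|[]]; auto..|].
    eapply fle_trans; [apply fmeet_list_le; left; eauto|].
    eapply fle_trans; [exact Hab|apply le_fsup_list; left; auto].
  - intros a b Ha Hb. apply NNPP. intro Hab.
    apply (maximal_pair_not_le [a; b] [a ⊓ b]);
      [intros x [<-|[<-|[]]]; auto|intros x [<-|[]]; auto|].
    eapply fle_trans; [|apply le_fsup_list; left; auto].
    apply fmeet_glb; apply fmeet_list_le; simpl; auto.
  - apply NNPP. intro Ht.
    apply (maximal_pair_not_le [] [⊤]); [intros _ []|intros x [<-|[]]; auto|].
    apply le_fsup_list. left. auto.
  - intro Hb. apply (maximal_pair_not_le [⊥] []); [intros x [<-|[]]; auto|intros _ []|].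
    eapply fle_trans; [apply fmeet_list_le; left; eauto|auto].
  - intros a b Hab. apply NNPP. intro H.
    apply (maximal_pair_not_le [a ⊔ b] [a; b]);
      [intros x [<-|[]]; auto|intros x [<-|[<-|[]]]; auto|].
    eapply fle_trans; [apply fmeet_list_le; left; eauto|].
    apply join_le; apply le_fsup_list; simpl; auto.
Qed.

Lemma maximal_pair_not_K a b : A a -> ~ A b -> ~ K a b.
Proof.
  intros Ha Hb. apply (K_consistent_single A B); auto. apply maximal_pair_not_A; auto.
Qed.

End MaximalPair.

Lemma finitely_consistent_pair (S : L + L -> Prop) :
  finitely_consistent
    (fun l => ~ K_consistent (fun a => In (inl a) l) (fun b => In (inr b) l)) S <->
  K_consistent (fun a => S (inl a)) (fun b => S (inr b)).
Proof.
  split.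
  - intros H la lb Ha Hb HK. apply (H (map inl la ++ map inr lb)).
    + intros t Ht. apply in_app_or in Ht as [Ht|Ht];
        apply in_map_iff in Ht as [x [<- Hx]]; auto.
    + intro Hc. apply (Hc la lb); auto; intros x Hx; apply in_or_app;
        [left|right]; apply in_map; auto.
  - intros H l Hl Hc. apply Hc.
    refine (K_consistent_sub _ _ _ _ _ _ H); auto.
Qed.

Theorem prime_filter_of_K_consistent (A0 B0 : L -> Prop) :
  K_consistent A0 B0 ->
  exists x, prime_filter L x /\ (forall a, A0 a -> x a) /\ (forall b, B0 b -> ~ x b) /\
    (forall a b, x a -> ~ x b -> ~ K a b).
Proof.
  intro H0.
  set (S0 := fun t : L + L => match t with inl a => A0 a | inr b => B0 b end).
  destruct (maximal_finitely_consistent (L + L)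
    (fun l => ~ K_consistent (fun a => In (inl a) l) (fun b => In (inr b) l)) S0)
    as [S [HS0 [HS Smax]]];
    [apply finitely_consistent_pair; auto|].
  apply finitely_consistent_pair in HS.
  set (A := fun a => S (inl a)). set (B := fun b => S (inr b)).
  assert (A_max : forall c, K_consistent (fun a => A a \/ a = c) B -> A c).
  { intros c Hc. apply Smax, finitely_consistent_pair.
    refine (K_consistent_sub _ _ _ _ _ _ Hc); intros x [Hx|Hx]; try discriminate;
      [left|right; congruence|]; auto. }
  assert (B_max : forall c, K_consistent A (fun b => B b \/ b = c) -> B c).
  { intros c Hc. apply Smax, finitely_consistent_pair.
    refine (K_consistent_sub _ _ _ _ _ _ Hc); intros x [Hx|Hx]; try discriminate;
      [|left|right; congruence]; auto. }
  exists A. split; [apply (maximal_pair_prime A B); auto|].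
  split; [intros a Ha; apply (HS0 (inl a)); auto|].
  split; [|apply (maximal_pair_not_K A B); auto].
  intros b Hb Ha. apply (K_consistent_single A B b b HS Ha); [apply (HS0 (inr b)); auto|].
  apply K_le, fle_refl.
Qed.

End Entailment.
End PrimeFilters.
Arguments pf_up {L x} Hx {a b}.
Arguments pf_meet {L x} Hx {a b}.
Arguments pf_join {L x} Hx {a b}.
Arguments pf_top {L x} Hx.
Arguments pf_bot {L x} Hx.
Arguments pf_fsup_list {L x} Hx {l}.
Arguments pf_fmeet_list {L x} Hx {l}.

Section PriestleySpace.
Variable L : Frame.
Local Notation "a ≤ b" := (fle L a b) (at level 70).
Local Notation "a ⊓ b" := (fmeet L a b) (at level 40, left associativity).
Local Notation "a ⊔ b" := (fjoin L a b) (at level 50, left associativity).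
Local Notation "⊤" := (ftop L).
Local Notation "⊥" := (fbot L).
Local Notation "⋁ l" := (fsup_list L l) (at level 35).
Local Notation X := (XL L).
Local Notation Xo := (@XL_open L).
Local Notation Xle := (@XL_le L).
Hint Resolve fle_refl fmeet_lb1 fmeet_lb2 le_top bot_le le_joinl le_joinr : core.

Definition pt (x : X) : L -> Prop := proj1_sig x.

Lemma pt_prime (x : X) : prime_filter L (pt x).
Proof. exact (proj2_sig x). Qed.
Hint Resolve pt_prime : core.

Lemma pt_up (x : X) a b : pt x a -> a ≤ b -> pt x b.
Proof. apply pf_up; auto. Qed.

Lemma XL_ext (x y : X) : (forall a, pt x a <-> pt y a) -> x = y.
Proof.
  destruct x as [x Hx], y as [y Hy]. unfold pt; simpl. intro H.
  assert (x = y) by (apply set_ext; auto). subst y. f_equal. apply proof_irrelevance.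
Qed.

Lemma exists_point (A0 B0 : L -> Prop) :
  (forall la lb, (forall a, In a la -> A0 a) -> (forall b, In b lb -> B0 b) ->
     ~ fmeet_list L la ≤ ⋁ lb) ->
  exists x : X, (forall a, A0 a -> pt x a) /\ (forall b, B0 b -> ~ pt x b).
Proof.
  intro H0.
  destruct (prime_filter_of_K_consistent L (fle L)) with (A0 := A0) (B0 := B0)
    as [x [Hx [HA [HB _]]]]; auto.
  - intros a a' b b' H1 H2 H3. eapply fle_trans; [exact H1|]. eapply fle_trans; eauto.
  - intros a b c. apply le_cut.
  - exists (exist _ x Hx). auto.
Qed.

Lemma point_separating a b : ~ a ≤ b -> exists x : X, pt x a /\ ~ pt x b.
Proof.
  intro Hab. destruct (exists_point (fun c => c = a) (fun c => c = b)) as [x [Ha Hb]]; eauto.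
  intros la lb Hla Hlb Hle. apply Hab.
  eapply fle_trans; [apply le_fmeet_list; intros c Hc; rewrite (Hla c Hc); auto|].
  eapply fle_trans; [exact Hle|]. apply fsup_list_le. intros c Hc. rewrite (Hlb c Hc). auto.
Qed.

Lemma le_of_pt a b : (forall x : X, pt x a -> pt x b) -> a ≤ b.
Proof.
  intro H. apply NNPP. intro Hab. destruct (point_separating a b Hab) as [x [Ha Hb]]. auto.
Qed.

Definition basic (a b : L) : X -> Prop := fun y => pt y a /\ ~ pt y b.

Lemma subbasic_list_basic (l : list (X -> Prop)) (x : X) :
  (forall s, In s l -> XL_subbasis s) -> (forall s, In s l -> s x) ->
  exists a b, basic a b x /\ forall y, basic a b y -> forall s, In s l -> s y.
Proof.
  induction l as [|s l IH]; intros H1 H2.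
  - exists ⊤, ⊥. split; [split; [apply pf_top|apply pf_bot]; auto|intros _ _ _ []].
  - destruct (IH (fun t Ht => H1 t (or_intror Ht)) (fun t Ht => H2 t (or_intror Ht)))
      as [a [b [[Ha Hb] Hy]]].
    assert (Hsx : s x) by (apply H2; left; auto).
    destruct (H1 s (or_introl eq_refl)) as [c [-> | ->]].
    + exists (a ⊓ c), b. split; [split; [apply pf_meet|]; auto|].
      intros y [Hya Hyb] t Ht. apply pf_meet in Hya as [Hya Hyc]; auto.
      destruct Ht as [<-|Ht]; [exact Hyc|apply Hy; [split|]; auto].
    + exists a, (b ⊔ c). split.
      * split; auto. rewrite pf_join; auto. intros [|]; auto.
      * intros y [Hya Hyb] t Ht. rewrite pf_join in Hyb; auto.
        destruct Ht as [<-|Ht]; [intro; auto|apply Hy; [split|]; auto].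
Qed.

Lemma XL_open_iff (U : X -> Prop) :
  Xo U <-> forall x, U x -> exists a b, basic a b x /\ sub (basic a b) U.
Proof.
  split.
  - intros H x Hx. destruct (H x Hx) as [l [H1 [H2 H3]]].
    destruct (subbasic_list_basic l x H1 H2) as [a [b [Hab Hy]]].
    exists a, b. split; auto. intros y Hy'. apply H3. apply Hy; auto.
  - intros H x Hx. destruct (H x Hx) as [a [b [Hab Hsub]]].
    exists [phi a; setC (phi b)]. split; [|split].
    + intros s [<-|[<-|[]]]; [exists a|exists b]; auto.
    + destruct Hab as [Ha Hb]. intros s [<-|[<-|[]]]; auto.
    + intros y Hs. apply Hsub. split; [apply (Hs (phi a))|apply (Hs (setC (phi b)))]; simpl; auto.
Qed.

Lemma basic_open a b : Xo (basic a b).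
Proof. apply XL_open_iff. intros x Hx. exists a, b. split; auto. intros y; auto. Qed.

Lemma phi_open a : Xo (phi a).
Proof.
  apply XL_open_iff. intros x Hx. exists a, ⊥. split; [split; [|apply pf_bot]; auto|].
  intros y [Hy _]. auto.
Qed.

Lemma phiC_open a : Xo (setC (phi a)).
Proof.
  apply XL_open_iff. intros x Hx. exists ⊤, a. split; [split; [apply pf_top|]; auto|].
  intros y [_ Hy]. auto.
Qed.

Lemma phi_meet a b : phi (a ⊓ b) = setI (phi a) (phi b).
Proof. apply set_ext. intro z. apply (pf_meet (pt_prime z)). Qed.

Lemma phi_top : phi ⊤ = fun _ => True.
Proof. apply set_ext. intro z. split; [auto|intros _; apply (pf_top (pt_prime z))]. Qed.

Lemma phi_clopen a : clopen Xo (phi a).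
Proof. split; [apply phi_open|apply phiC_open]. Qed.

Lemma phiC_clopen a : clopen Xo (setC (phi a)).
Proof. split; [apply phiC_open|]. unfold closed. rewrite setCC. apply phi_open. Qed.

Lemma phi_clopen_upset a : clopen_upset Xo Xle (phi a).
Proof. split; [apply phi_clopen|]. intros x y Hx Hxy. apply Hxy. exact Hx. Qed.

Lemma basic_clopen a b : clopen Xo (basic a b).
Proof.
  split; [apply basic_open|]. apply XL_open_iff. intros x Hx. unfold setC, basic in Hx.
  destruct (classic (pt x a)) as [Ha|Ha].
  - exists b, ⊥. split; [split; [apply NNPP; intro; auto|apply pf_bot; auto]|].
    intros y [Hy _] [_ Hy']. auto.
  - exists ⊤, a. split; [split; [apply pf_top|]; auto|]. intros y [_ Hy] [Hy' _]. auto.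
Qed.

Lemma XL_topology : is_topology Xo.
Proof.
  split; [|split; [|split]].
  - apply XL_open_iff. intros x _. exists ⊤, ⊥.
    split; [split; [apply pf_top|apply pf_bot]; auto|intros y _; exact I].
  - intros U V HU HV. rewrite XL_open_iff in *. intros x [Ux Vx].
    destruct (HU x Ux) as [a1 [b1 [[A1 B1] H1]]], (HV x Vx) as [a2 [b2 [[A2 B2] H2]]].
    exists (a1 ⊓ a2), (b1 ⊔ b2). split.
    + split; [apply pf_meet; auto|rewrite pf_join; auto; tauto].
    + intros y [Ha Hb]. apply pf_meet in Ha as [Ha1 Ha2]; auto.
      rewrite pf_join in Hb; auto. split; [apply H1|apply H2]; split; tauto.
  - intros F HF. apply XL_open_iff. intros x [U [FU Ux]].
    destruct (proj1 (XL_open_iff U) (HF U FU) x Ux) as [a [b [Hab H]]].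
    exists a, b. split; auto. intros y Hy. exists U. auto.
  - intros U V HUV HU. rewrite XL_open_iff in *. intros x Vx.
    destruct (HU x (proj2 (HUV x) Vx)) as [a [b [Hab H]]].
    exists a, b. split; auto. intros y Hy. apply HUV. auto.
Qed.

(* Compactness is a prime filter theorem for the entailment "C ∩ basic a b is
   finitely covered", which is closed under weakening and cut. *)
Lemma XL_closed_compact (C : X -> Prop) : closed Xo C -> compact_set Xo C.
Proof.
  intros HC F HF Hcov. apply NNPP; intro Hn.
  set (K := fun a b => exists l : list (X -> Prop), (forall U, In U l -> F U) /\
      forall y, C y -> basic a b y -> exists U, In U l /\ U y).
  destruct (prime_filter_of_K_consistent L K)
    with (A0 := fun _ : L => False) (B0 := fun _ : L => False) as [P [HP [_ [_ HK]]]].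
  - intros a a' b b' H1 H2 [l [Hl Hy]]. exists l. split; auto.
    intros y Cy [Ha Hb]. apply Hy; auto. split; [eapply pt_up; eauto|].
    intro. apply Hb. eapply pt_up; eauto.
  - intros a b c [l1 [Hl1 Hy1]] [l2 [Hl2 Hy2]]. exists (l1 ++ l2).
    split; [intros U HU; apply in_app_or in HU as [|]; auto|].
    intros y Cy [Ha Hb]. destruct (classic (pt y c)) as [Hc|Hc].
    + destruct (Hy1 y Cy) as [U [H1 H2]]; [split; [apply pf_meet|]; auto|].
      exists U. split; auto. apply in_or_app; auto.
    + destruct (Hy2 y Cy) as [U [H1 H2]]; [split; [|rewrite pf_join]; auto; tauto|].
      exists U. split; auto. apply in_or_app; auto.
  - intros a b Hab. exists []. split; [intros _ []|].
    intros y _ [Ha Hb]. exfalso. apply Hb. eapply pt_up; eauto.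
  - intros la lb Ha Hb [l [Hl Hy]]. apply Hn. exists l. split; auto. intros y Cy.
    apply Hy; auto. split.
    + apply pf_fmeet_list; auto. intros c Hc. destruct (Ha c Hc).
    + intro H. apply pf_fsup_list in H as [c [H1 _]]; auto. apply (Hb c H1).
  - set (x := exist _ P HP : X).
    destruct (classic (C x)) as [Cx|Cx].
    + destruct (Hcov x Cx) as [U [FU Ux]].
      destruct (proj1 (XL_open_iff U) (HF U FU) x Ux) as [a [b [[Ha Hb] H]]].
      apply (HK a b Ha Hb). exists [U]. split; [intros V [<-|[]]; auto|].
      intros y _ Hy. exists U. split; [left|apply H]; auto.
    + destruct (proj1 (XL_open_iff _) HC x Cx) as [a [b [[Ha Hb] H]]].
      apply (HK a b Ha Hb). exists []. split; [intros _ []|].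
      intros y Cy Hy. exfalso. exact (H y Hy Cy).
Qed.

Lemma XL_closed_compact_family {I : Type} (C : X -> Prop) (P : I -> Prop) (f : I -> X -> Prop) :
  closed Xo C -> (forall i, P i -> Xo (f i)) -> (forall x, C x -> exists i, P i /\ f i x) ->
  exists li, (forall i, In i li -> P i) /\ forall x, C x -> exists i, In i li /\ f i x.
Proof.
  intros HC Hf Hcov.
  destruct (XL_closed_compact C HC (fun U => exists i, P i /\ U = f i)) as [lU [HlU Hfin]].
  - intros U [i [Pi ->]]. auto.
  - intros x Cx. destruct (Hcov x Cx) as [i [Pi Hi]]. eauto.
  - destruct (list_lift P f lU HlU) as [li [Hli ->]]. exists li. split; auto.
    intros x Cx. destruct (Hfin x Cx) as [U [HU Ux]].
    apply in_map_iff in HU as [i [<- Hi]]. eauto.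
Qed.

Lemma XL_compact : compact_space Xo.
Proof. apply XL_closed_compact. apply XL_open_iff. intros x H. exfalso. apply H. exact I. Qed.

Lemma open_upset_phi_nbhd (W : X -> Prop) (x : X) :
  Xo W -> upset Xle W -> W x -> exists a, pt x a /\ sub (phi a) W.
Proof.
  intros HW HWu Wx.
  destruct (XL_closed_compact_family (setC W) (pt x) (fun c => setC (phi c)))
    as [l [Hl Hcov]].
  - unfold closed. rewrite setCC. auto.
  - intros. apply phiC_open.
  - intros y Hy. apply NNPP. intro H. apply Hy. apply (HWu x); auto.
    intros c Hc. apply NNPP. intro. apply H. eauto.
  - exists (fmeet_list L l). split; [apply pf_fmeet_list; auto|].
    intros y Hy. apply NNPP. intro Wy. destruct (Hcov y Wy) as [c [Hc Hyc]].
    apply Hyc. apply (pt_up y _ _ Hy). apply fmeet_list_le; auto.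
Qed.

Lemma clopen_upset_phi (U : X -> Prop) : clopen_upset Xo Xle U -> exists a, U = phi a.
Proof.
  intros [[HUo HUc] HUu].
  destruct (XL_closed_compact_family U (fun a => sub (phi a) U) (@phi L)) as [l [Hl Hcov]];
    auto using phi_open.
  - intros x Ux. destruct (open_upset_phi_nbhd U x HUo HUu Ux) as [a [Ha Hsub]]. eauto.
  - exists (⋁ l). apply set_ext. intro y. split.
    + intro Uy. destruct (Hcov y Uy) as [a [Ha Hy]]. apply (pf_fsup_list (pt_prime y)). eauto.
    + intro Hy. apply (pf_fsup_list (pt_prime y)) in Hy as [a [Ha Hya]]. apply (Hl a); auto.
Qed.

Lemma phi_cover_finite (a : L) (S : L -> Prop) :
  (forall y, pt y a -> exists s, S s /\ pt y s) ->
  exists l, (forall c, In c l -> S c) /\ a ≤ ⋁ l.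
Proof.
  intro Hcov.
  destruct (XL_closed_compact_family (phi a) S (@phi L)) as [l [Hl Hfin]];
    [apply phiC_open|intros; apply phi_open|exact Hcov|].
  exists l. split; auto. apply le_of_pt. intros y Hy.
  apply (pf_fsup_list (pt_prime y)). apply Hfin. exact Hy.
Qed.

Lemma closure_phi_union (S : L -> Prop) (x : X) :
  closure Xo (fun y => exists s, S s /\ pt y s) x <-> pt x (fsup L S).
Proof.
  split.
  - intro H. apply NNPP. intro Hn.
    destruct (H (setC (phi (fsup L S))) (phiC_open _) Hn) as [y [Hy [s [Ss Hs]]]].
    apply Hy. apply (pt_up y s); auto. apply fsup_ub; auto.
  - intros Hx U HU Ux. destruct (proj1 (XL_open_iff U) HU x Ux) as [a [b [[Ha Hb] Hy]]].
    assert (H1 : ~ a ⊓ fsup L S ≤ b)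
      by (intro H; apply Hb; apply (pt_up x (a ⊓ fsup L S)); auto; apply pf_meet; auto).
    assert (exists s, S s /\ ~ a ⊓ s ≤ b) as [s [Ss Hs]].
    { apply NNPP. intro H. apply H1. eapply fle_trans; [apply meet_fsup_le|].
      apply fsup_least. intros c [s [Ss ->]]. apply NNPP. intro. apply H. eauto. }
    destruct (point_separating _ _ Hs) as [y [Hy1 Hy2]]. apply pf_meet in Hy1 as [Hya Hys]; auto.
    exists y. split; [apply Hy; split|exists s]; auto.
Qed.

Lemma downset_basic a b z : downset_of Xle (basic a b) z <-> ~ pt z (fimp L a b).
Proof.
  split.
  - intros [x [[Ha Hb] Hzx]] Hi. apply Hb. apply Hzx in Hi.
    apply (pt_up x (fimp L a b ⊓ a)); [apply pf_meet; auto|apply fimp_adj; auto].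
  - intro Hi.
    destruct (exists_point (fun c => pt z c \/ c = a) (fun c => c = b)) as [x [HA HB]].
    + intros la lb Ha Hb H. destruct (fmeet_list_split L (pt z) a la Ha) as [la' [H1 H2]].
      apply Hi. apply (pt_up z (fmeet_list L la')); [apply pf_fmeet_list; auto|].
      apply fimp_adj. eapply fle_trans; [exact H2|]. eapply fle_trans; [exact H|].
      apply fsup_list_le. intros c Hc. rewrite (Hb c Hc). auto.
    + exists x. split; [split; auto|intros c Hc; apply HA; auto].
Qed.

Lemma clopen_basic_union (U : X -> Prop) :
  clopen Xo U -> exists lp : list (L * L),
    forall y, U y <-> exists p, In p lp /\ basic (fst p) (snd p) y.
Proof.
  intros [HUo HUc].
  destruct (XL_closed_compact_family U (fun p => sub (basic (fst p) (snd p)) U)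
              (fun p => basic (fst p) (snd p))) as [lp [Hlp Hcov]]; auto using basic_open.
  - intros x Ux. destruct (proj1 (XL_open_iff U) HUo x Ux) as [a [b [Hab Hsub]]].
    exists (a, b). auto.
  - exists lp. intro y. split; auto. intros [p [Hp Hy]]. apply (Hlp p); auto.
Qed.

(* The downset of a finite union of basic sets [a_i \ b_i] is the complement of
   the meet of the Heyting implications [a_i → b_i]. *)
Lemma downset_clopen (U : X -> Prop) : clopen Xo U -> clopen Xo (downset_of Xle U).
Proof.
  intro HU. destruct (clopen_basic_union U HU) as [lp Hlp].
  set (m := fmeet_list L (map (fun p => fimp L (fst p) (snd p)) lp)).
  replace (downset_of Xle U) with (setC (phi m)); [apply phiC_clopen|].
  apply set_ext. intro z. unfold setC, phi, m.
  rewrite (pf_fmeet_list (pt_prime z)). split.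
  - intro Hz. apply not_all_ex_not in Hz as [c Hc]. apply imply_to_and in Hc as [Hc Hzc].
    apply in_map_iff in Hc as [p [<- Hp]].
    apply downset_basic in Hzc as [x [Hx Hzx]]. exists x. split; auto. apply Hlp. eauto.
  - intros [x [Ux Hzx]] Hm. destruct (proj1 (Hlp x) Ux) as [p [Hp Hbp]].
    apply (proj1 (downset_basic (fst p) (snd p) z)); [exists x; auto|].
    apply Hm, in_map_iff. eauto.
Qed.

Lemma open_upset_union_phi (W : X -> Prop) :
  Xo W -> upset Xle W -> W = fun z => exists s, sub (phi s) W /\ pt z s.
Proof.
  intros HWo HWu. apply set_ext. intro z. split.
  - intro Wz. destruct (open_upset_phi_nbhd W z HWo HWu Wz) as [a [Ha Hsub]]. eauto.
  - intros [s [Ss Hs]]. apply Ss. exact Hs.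
Qed.

Lemma closure_open_upset (W : X -> Prop) :
  Xo W -> upset Xle W -> closure Xo W = phi (fsup L (fun s => sub (phi s) W)).
Proof.
  intros HWo HWu. rewrite (open_upset_union_phi W HWo HWu) at 1.
  apply set_ext. intro z. apply closure_phi_union.
Qed.

Lemma XL_priestley : priestley_space Xo Xle.
Proof.
  split; [split; [|split; [|split]]|split].
  - apply XL_topology.
  - apply XL_compact.
  - intros x y Hxy.
    assert (exists c, ~ (pt x c <-> pt y c)) as [c Hc].
    { apply NNPP. intro H. apply Hxy, XL_ext. intro c. apply NNPP. intro. apply H. eauto. }
    destruct (classic (pt x c)) as [Hx|Hx].
    + exists (phi c), (setC (phi c)). repeat split; auto using phi_open, phiC_open.
      * intro Hy. apply Hc. tauto.
      * intros z [H1 H2]. auto.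
    + exists (setC (phi c)), (phi c). repeat split; auto using phi_open, phiC_open.
      * apply NNPP. intro Hy. apply Hc. tauto.
      * intros z [H1 H2]. auto.
  - intros U x HU Ux. destruct (proj1 (XL_open_iff U) HU x Ux) as [a [b [Hab Hsub]]].
    exists (basic a b). auto using basic_clopen.
  - split; [|split].
    + intros x a H; auto.
    + intros x y z H1 H2 a H. auto.
    + intros x y H1 H2. apply XL_ext. intro a. split; [apply H1|apply H2].
  - intros x y Hxy. assert (exists c, pt x c /\ ~ pt y c) as [c [H1 H2]].
    { apply NNPP. intro H. apply Hxy. intros c Hc. apply NNPP. intro. apply H. eauto. }
    exists (phi c). auto using phi_clopen_upset.
Qed.

Theorem XL_L_space : L_space Xo Xle.
Proof.
  split; [apply XL_priestley|split; [apply downset_clopen|]].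
  intros W HWo HWu. rewrite closure_open_upset; auto. apply phi_open.
Qed.

Lemma sp_way_below_phi u v : sp_way_below Xo Xle (phi v) (phi u) <-> way_below L v u.
Proof.
  split.
  - intros H S Hu. apply phi_cover_finite.
    apply (H (fun z => exists s, S s /\ pt z s)).
    + apply XL_open_iff. intros x [s [Ss Hs]]. exists s, ⊥.
      split; [split; [|apply pf_bot]; auto|]. intros y [Hy _]. eauto.
    + intros x y [s [Ss Hs]] Hxy. exists s. split; auto. apply Hxy. auto.
    + intros y Hy. apply closure_phi_union. eapply pt_up; eauto.
  - intros Hvu W HWo HWu Hsub y Hy.
    rewrite (closure_open_upset W HWo HWu) in Hsub.
    destruct (Hvu _ (le_of_pt _ _ Hsub)) as [l [Hl Hvl]].
    assert (Hyl : pt y (⋁ l)) by (eapply pt_up; eauto).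
    apply (pf_fsup_list (pt_prime y)) in Hyl as [c [Hc1 Hc2]].
    exact (Hl c Hc1 y Hc2).
Qed.

Lemma ker_phi u y : ker Xo Xle (phi u) y <-> exists v, way_below L v u /\ pt y v.
Proof.
  split.
  - intros [V [HV [Hwb Vy]]]. destruct (clopen_upset_phi V HV) as [v ->].
    exists v. split; auto. apply sp_way_below_phi; auto.
  - intros [v [Hv Hy]]. exists (phi v).
    split; [apply phi_clopen_upset|split; [apply sp_way_below_phi|]]; auto.
Qed.

(* The principal downset of a point with completely prime filter is the
   complement of [phi] of the join of the elements it misses. *)
Lemma spatial_pt_iff (x : X) : spatial_pt Xo Xle x <-> completely_prime L (pt x).
Proof.
  split.
  - intros [Ho Hc] S HS. apply NNPP. intro Hn.
    assert (HU : clopen_upset Xo Xle (setC (fun z => Xle z x))).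
    { split; [split; [auto|unfold closed; rewrite setCC; auto]|].
      intros z w Hz Hzw Hw. apply Hz. intros a Ha. apply Hw, Hzw, Ha. }
    destruct (clopen_upset_phi _ HU) as [c Hcq].
    assert (Hxc : ~ pt x c).
    { intro H. change (phi c x) in H. rewrite <- Hcq in H. apply H. intros a; auto. }
    apply Hxc. eapply pt_up; [exact HS|]. apply fsup_least. intros s Ss.
    apply le_of_pt. intros z Hz. change (phi c z). rewrite <- Hcq.
    intro Hzx. apply Hn. exists s. split; [|apply Hzx]; auto.
  - intro Hcp. set (c := fsup L (fun b => ~ pt x b)).
    assert (Hc : ~ pt x c) by (intro H; destruct (Hcp _ H) as [s [H1 H2]]; auto).
    unfold spatial_pt. replace (fun z => Xle z x) with (setC (phi c)); [apply phiC_clopen|].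
    apply set_ext. intro z. split.
    + intros Hz a Ha. apply NNPP. intro Hxa. apply Hz. eapply pt_up; [exact Ha|]. apply fsup_ub. auto.
    + intros Hzx Hzc. apply Hc, Hzx, Hzc.
Qed.

Lemma minimal_phi_completely_prime (k : L) (x : X) :
  fcompact L k -> minimal_in Xle (phi k) x -> completely_prime L (pt x).
Proof.
  intros Hk [Hxk Hmin] S HS. apply NNPP. intro Hn.
  destruct (completely_prime_filter_of_compact L k (fun c => ~ pt x c \/ c = fsup L S) Hk)
    as [P [HP [_ [HPk HPB]]]].
  - intros lb Hlb Hle.
    destruct (fsup_list_split L (fun c => ~ pt x c) (fsup L S) lb Hlb) as [l' [H1 H2]].
    destruct (Hk (fun c => In c l' \/ S c)) as [l'' [H3 H4]].
    { eapply fle_trans; [exact Hle|]. eapply fle_trans; [exact H2|]. apply join_le.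
      - apply fsup_list_le. intros c Hc. apply fsup_ub. auto.
      - apply fsup_le_fsup. auto. }
    assert (Hxl : pt x (⋁ l'')) by (apply (pt_up x k); [exact Hxk|exact H4]).
    apply (pf_fsup_list (pt_prime x)) in Hxl as [c [Hc1 Hc2]].
    destruct (H3 c Hc1) as [Hc|Sc]; [exact (H1 c Hc Hc2)|]. apply Hn. eauto.
  - set (z := exist _ P HP : X).
    assert (Hzx : Xle z x) by (intros a Ha; apply NNPP; intro; apply (HPB a); auto).
    assert (Hz : z = x) by (apply Hmin; auto).
    apply (HPB (fsup L S)); auto. change (pt z (fsup L S)). rewrite Hz. auto.
Qed.

Lemma phi_clopen_scott_upset (k : L) : fcompact L k -> clopen_scott_upset Xo Xle (phi k).
Proof.
  intro Hk. split; [apply phi_clopen|].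
  split; [apply phi_clopen|split; [apply phi_clopen_upset|]].
  intros x Hx. apply spatial_pt_iff. eapply minimal_phi_completely_prime; eauto.
Qed.

Lemma coherent_L_space_stable :
  coherent_L_space Xo Xle -> way_below_stable L /\ fcompact L ⊤.
Proof.
  intros [_ [_ [Hker Htop]]].
  split.
  - intros a b c Hb Hc.
    assert (Hcov : forall y, pt y a -> exists s, way_below L s (b ⊓ c) /\ pt y s).
    { intros y Hy. apply ker_phi.
      rewrite phi_meet.
      apply Hker; try apply phi_clopen_upset. split; apply ker_phi; eauto. }
    destruct (phi_cover_finite a _ Hcov) as [l [Hl Hal]].
    eapply way_below_le_l; [exact Hal|]. apply way_below_fsup_list. auto.
  - assert (Hcov : forall y, pt y ⊤ -> exists s, way_below L s ⊤ /\ pt y s)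
      by (intros y _; apply ker_phi; rewrite phi_top; apply Htop).
    destruct (phi_cover_finite _ _ Hcov) as [l [Hl Hal]].
    eapply way_below_le_l; [exact Hal|]. apply way_below_fsup_list. auto.
Qed.

Section Algebraic.
Hypothesis alg : algebraic_frame L.

Lemma XL_core_dense (U : X -> Prop) :
  clopen_upset Xo Xle U -> sub U (closure Xo (core Xo Xle U)).
Proof.
  intros HU. destruct (clopen_upset_phi U HU) as [u ->]. intros x Hx.
  assert (H : closure Xo (fun y => exists s, (fcompact L s /\ s ≤ u) /\ pt y s) x)
    by (apply closure_phi_union; rewrite <- (alg u); exact Hx).
  intros V HV Vx. destruct (H V HV Vx) as [y [Vy [s [[Hs1 Hs2] Hys]]]].
  exists y. split; auto. exists (phi s).
  split; [apply phi_clopen_scott_upset; auto|split; auto].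
  intros z Hz. eapply pt_up; eauto.
Qed.

Theorem coherent_L_space_iff :
  coherent_L_space Xo Xle <-> way_below_stable L /\ fcompact L ⊤.
Proof.
  split; [apply coherent_L_space_stable|]. intros [Hst Htop].
  split; [apply XL_L_space|split; [apply XL_core_dense|split]].
  - intros U V HU HV.
    destruct (clopen_upset_phi U HU) as [u ->], (clopen_upset_phi V HV) as [v ->].
    rewrite <- phi_meet.
    intro y. unfold setI. rewrite !ker_phi. split.
    + intros [w [Hw Hy]]. split; exists w; split; auto; eapply way_below_le_r; eauto.
    + intros [[a [Ha Hya]] [b [Hb Hyb]]]. exists (a ⊓ b). split; [|apply pf_meet; auto].
      apply Hst; [apply (way_below_le_l L a)|apply (way_below_le_l L b)]; auto.
  - intro x. rewrite <- phi_top.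
    apply ker_phi. exists ⊤. split; [exact Htop|apply pf_top; auto].
Qed.

End Algebraic.
End PriestleySpace.

Section SpatialPart.
Variable L : Frame.
Local Notation "a ≤ b" := (fle L a b) (at level 70).
Local Notation "a ⊓ b" := (fmeet L a b) (at level 40, left associativity).
Local Notation "⊤" := (ftop L).
Local Notation "⋁ l" := (fsup_list L l) (at level 35).
Local Notation X := (XL L).
Local Notation Y := (YL L).
Local Notation Yo := (@YL_open L).
Hint Resolve fle_refl fmeet_lb1 fmeet_lb2 le_top bot_le le_joinl le_joinr : core.

Definition ypt (y : Y) : L -> Prop := pt L (proj1_sig y).
Definition phiY (a : L) : Y -> Prop := fun y => ypt y a.

Lemma ypt_prime (y : Y) : prime_filter L (ypt y).
Proof. apply pt_prime. Qed.
Hint Resolve ypt_prime : core.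

Lemma ypt_completely_prime (y : Y) : completely_prime L (ypt y).
Proof. apply spatial_pt_iff. exact (proj2_sig y). Qed.

Lemma ypt_up (y : Y) a b : ypt y a -> a ≤ b -> ypt y b.
Proof. apply pf_up; auto. Qed.

Lemma YL_ext (y y' : Y) : (forall a, ypt y a <-> ypt y' a) -> y = y'.
Proof.
  destruct y as [y Hy], y' as [y' Hy']. unfold ypt; simpl. intro H.
  assert (y = y') by (apply XL_ext; auto). subst y'. f_equal. apply proof_irrelevance.
Qed.

Lemma YL_open_phiY (V : Y -> Prop) : Yo V -> exists a, V = phiY a.
Proof.
  intros [U [HU HV]]. destruct (clopen_upset_phi L U HU) as [a ->].
  exists a. apply set_ext. intro y. apply HV.
Qed.

Lemma phiY_open a : Yo (phiY a).
Proof. exists (phi a). split; [apply phi_clopen_upset|reflexivity]. Qed.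

Lemma phiY_meet a b : phiY (a ⊓ b) = setI (phiY a) (phiY b).
Proof. apply set_ext. intro y. apply (pf_meet (ypt_prime y)). Qed.

Lemma phiY_top : phiY ⊤ = fun _ => True.
Proof. apply set_ext. intro y. split; [auto|intros _; apply (pf_top (ypt_prime y))]. Qed.

Lemma YL_topology : is_topology Yo.
Proof.
  split; [|split; [|split]].
  - rewrite <- phiY_top. apply phiY_open.
  - intros U V HU HV.
    destruct (YL_open_phiY U HU) as [a ->], (YL_open_phiY V HV) as [b ->].
    rewrite <- phiY_meet. apply phiY_open.
  - intros F HF. set (S := fun c => F (phiY c)).
    replace (fun y => exists U, F U /\ U y) with (phiY (fsup L S)); [apply phiY_open|].
    apply set_ext. intro y. split.
    + intro Hy. destruct (ypt_completely_prime y S Hy) as [s [Ss Hs]]. exists (phiY s). auto.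
    + intros [U [FU Uy]]. destruct (YL_open_phiY U (HF U FU)) as [c ->].
      eapply ypt_up; [exact Uy|]. apply fsup_ub. exact FU.
  - intros U V HUV HU. destruct (YL_open_phiY U HU) as [a ->].
    replace V with (phiY a); [apply phiY_open|]. apply set_ext. auto.
Qed.

Lemma closure_point_iff (y z : Y) :
  closure Yo (fun w => w = y) z <-> forall a, ypt z a -> ypt y a.
Proof.
  split.
  - intros H a Ha. destruct (H (phiY a) (phiY_open a) Ha) as [w [Hw ->]]. exact Hw.
  - intros H U HU Uz. destruct (YL_open_phiY U HU) as [a ->]. exists y. split; [apply H, Uz|auto].
Qed.

Section Algebraic.
Hypothesis alg : algebraic_frame L.

Lemma YL_separating a b : ~ a ≤ b -> exists y : Y, ypt y a /\ ~ ypt y b.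
Proof.
  intro H. destruct (compact_below_not_le L alg a b H) as [k [Hk [Hka Hkb]]].
  destruct (completely_prime_filter_of_compact L k (fun c => c = b) Hk)
    as [x [Hx [Hcp [Hxk Hxb]]]].
  - intros lb Hlb Hle. apply Hkb. eapply fle_trans; [exact Hle|].
    apply fsup_list_le. intros c Hc. rewrite (Hlb c Hc). auto.
  - set (x' := exist _ x Hx : X).
    exists (exist _ x' (proj2 (spatial_pt_iff L x') Hcp)).
    split; [apply (pf_up Hx Hxk Hka)|apply Hxb; auto].
Qed.

Lemma le_of_ypt a b : (forall y, ypt y a -> ypt y b) -> a ≤ b.
Proof.
  intro H. apply NNPP. intro H'. destruct (YL_separating a b H') as [y [H1 H2]]. auto.
Qed.

Lemma compact_phiY_iff a : compact_set Yo (phiY a) <-> fcompact L a.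
Proof.
  split.
  - intros H S Hle.
    destruct (H (fun U => exists s, S s /\ U = phiY s)) as [lU [HlU Hfin]].
    + intros U [s [_ ->]]. apply phiY_open.
    + intros y Hy. destruct (ypt_completely_prime y S (ypt_up y a _ Hy Hle)) as [s [Ss Hs]].
      exists (phiY s). eauto.
    + destruct (list_lift S phiY lU HlU) as [l [Hl ->]]. exists l. split; auto.
      apply le_of_ypt. intros y Hy. apply (pf_fsup_list (ypt_prime y)).
      destruct (Hfin y Hy) as [U [HU Uy]]. apply in_map_iff in HU as [s [<- Hs]]. eauto.
  - intros Ha F HF Hcov.
    destruct (Ha (fun c => F (phiY c))) as [l [Hl Hal]].
    + apply le_of_ypt. intros y Hy. destruct (Hcov y Hy) as [U [FU Uy]].
      destruct (YL_open_phiY U (HF U FU)) as [c ->].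
      eapply ypt_up; [exact Uy|]. apply fsup_ub. exact FU.
    + exists (map phiY l). split.
      * intros U HU. apply in_map_iff in HU as [c [<- Hc]]. auto.
      * intros y Hy. assert (Hyl : ypt y (⋁ l)) by exact (ypt_up y a _ Hy Hal).
        apply (pf_fsup_list (ypt_prime y)) in Hyl as [c [Hc Hyc]].
        exists (phiY c). split; [apply in_map|]; auto.
Qed.

Lemma not_below_prime_filter (c : L) :
  irreducible_closed Yo (setC (phiY c)) -> prime_filter L (fun a => ~ a ≤ c).
Proof.
  intros [_ [[y0 Hy0] Hirr]].
  split; [|split; [|split; [|split]]].
  - intros a b Ha Hab Hb. apply Ha. eapply fle_trans; eauto.
  - intros a b Ha Hb Hab.
    assert (Hcl : forall d, closed Yo (setC (phiY d)))
      by (intro d; unfold closed; rewrite setCC; apply phiY_open).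
    destruct (Hirr (setC (phiY a)) (setC (phiY b)) (Hcl a) (Hcl b)) as [H|H].
    + intros y Hyc. apply NNPP. intro H. apply Hyc.
      eapply ypt_up; [|exact Hab]. apply (pf_meet (ypt_prime y)).
      split; apply NNPP; intro; apply H; [left|right]; auto.
    + apply Ha, le_of_ypt. intros y Hy. apply NNPP. intro Hyc. exact (H y Hyc Hy).
    + apply Hb, le_of_ypt. intros y Hy. apply NNPP. intro Hyc. exact (H y Hyc Hy).
  - intro H. apply Hy0. eapply ypt_up; [|exact H]. apply (pf_top (ypt_prime y0)).
  - intro H. apply H. apply bot_le.
  - intros a b H. apply NNPP. intro H'. apply H.
    apply join_le; apply NNPP; intro; apply H'; [left|right]; auto.
Qed.

(* The generic point of an irreducible closed set [C = Y \ phiY c] is the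
   completely prime filter of the elements not below [c]. *)
Lemma YL_sober : sober Yo.
Proof.
  intros C HC. destruct (YL_open_phiY _ (proj1 HC)) as [c Hc].
  assert (HCc : C = setC (phiY c)) by (rewrite <- Hc, setCC; reflexivity).
  rewrite HCc in HC |- *. clear C Hc HCc.
  set (P := fun a => ~ a ≤ c).
  assert (Hcp : completely_prime L P).
  { intros S HS. apply NNPP. intro H. apply HS. apply fsup_least. intros s Ss.
    apply NNPP. intro. apply H. eauto. }
  set (xP := exist _ P (not_below_prime_filter c HC) : X).
  set (y := exist _ xP (proj2 (spatial_pt_iff L xP) Hcp) : Y).
  assert (Hseq : seteq (setC (phiY c)) (closure Yo (fun z => z = y))).
  { intro z. rewrite closure_point_iff. split.
    - intros Hz a Ha Hac. apply Hz. eapply ypt_up; eauto.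
    - intros H Hz. apply (H c Hz). apply fle_refl. }
  exists y. split; auto.
  intros x' Hx'. apply YL_ext. intro a.
  assert (Cy : setC (phiY c) y) by (apply Hseq, closure_point_iff; auto).
  assert (Cx : setC (phiY c) x') by (apply Hx', closure_point_iff; auto).
  apply Hx' in Cy. apply Hseq in Cx. rewrite closure_point_iff in Cy, Cx. split; auto.
Qed.

Theorem spectral_space_iff :
  spectral_space Yo <-> compact_meet_closed L /\ fcompact L ⊤.
Proof.
  split.
  - intros [_ [Hcpt [_ [_ Hint]]]]. split.
    + intros k1 k2 H1 H2. apply compact_phiY_iff. rewrite phiY_meet.
      apply Hint; (split; [apply phiY_open|apply compact_phiY_iff; auto]).
    + apply compact_phiY_iff. rewrite phiY_top. apply Hcpt.
  - intros [Hm Ht]. split; [apply YL_topology|split; [|split; [apply YL_sober|split]]].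
    + unfold compact_space. rewrite <- phiY_top. apply compact_phiY_iff. exact Ht.
    + intros U y HU Uy. destruct (YL_open_phiY U HU) as [a ->].
      assert (H : ypt y (fsup L (fun b => fcompact L b /\ b ≤ a)))
        by (rewrite <- (alg a); exact Uy).
      destruct (ypt_completely_prime y _ H) as [k [[Hk Hka] Hyk]].
      exists (phiY k). split; [split; [apply phiY_open|apply compact_phiY_iff; auto]|].
      split; auto. intros z Hz. eapply ypt_up; eauto.
    + intros K1 K2 [HK1 CK1] [HK2 CK2].
      destruct (YL_open_phiY _ HK1) as [a1 ->], (YL_open_phiY _ HK2) as [a2 ->].
      rewrite <- phiY_meet. apply compact_phiY_iff.
      apply Hm; apply compact_phiY_iff; auto.
Qed.

End Algebraic.
End SpatialPart.

Theorem theorem5p8 (L : Frame) :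
  algebraic_frame L ->
  (coherent_frame L <-> coherent_L_space (@XL_open L) (@XL_le L)) /\
  (coherent_L_space (@XL_open L) (@XL_le L) <-> spectral_space (@YL_open L)).
Proof.
  intro alg.
  rewrite (coherent_L_space_iff L alg), (spectral_space_iff L alg),
    <- (way_below_stable_iff L alg).
  unfold coherent_frame, arithmetic_frame, way_below_stable. tauto.
Qed.
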